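(* Let $\Gamma$ be a 3-colex, $c\in\{r,b,g,y\}$, let $v$ be a $c$-vertex of $\Gamma^*$ and let $\nu_v$ be the 3-cell of $\Gamma^{*\setminus c}$ obtained by merging all tetrahedra incident on $v$. Then $\pi_c(B^X_v)=B^X_{\nu_v}$, the $X$-type stabilizer generator of the toric code on $\Gamma^{*\setminus c}$ attached to $\nu_v$, and $\pi_{c'}(B^X_v)=I$ for every color $c'\neq c$.
   Context: Colors are $\{r,b,g,y\}$. A 3-colex $\Gamma$ is a 3-dimensional cell complex without boundary in which every vertex is 4-valent and lies in exactly four 3-cells, and whose 3-cells are properly 4-colored: every face lies in exactly two 3-cells, which have different colors. The dual complex $\Gamma^*$ has an $i$-cell for every $(3-i)$-cell of $\Gamma$, with incidences reversed; every 3-cell of $\Gamma^*$ is a tetrahedron. A vertex of $\Gamma^*$ is given the color of the corresponding 3-cell of $\Gamma$, so the four vertices of each tetrahedron have distinct colors. A face of $\Gamma^*$ is an $x$-face if none of its vertices has color $x$; each tetrahedron $\nu$ has a unique $x$-face $\pi_x(\nu)$. The 3D color code on $\Gamma$ has one qubit per tetrahedron of $\Gamma^*$ and $X$-stabilizer generators $B^X_v=\prod_{\nu\ni v}X_\nu$ for vertices $v$ of $\Gamma^*$. For a color $x$, the minor complex $\Gamma^{*\setminus x}$ is obtained from $\Gamma^*$ by deleting all vertices of color $x$ together with all edges and faces incident to them; its faces are the $x$-faces of $\Gamma^*$ and its 3-cells are obtained by merging, for each $x$-vertex, the tetrahedra containing it. The 3D toric code on $\Gamma^{*\setminus x}$ has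 qubits on faces and $X$-stabilizer generators $B^X_\mu=\prod_{f\in\partial\mu}X_f$ for 3-cells $\mu$. Operators are mapped by $\pi_x(\prod_{\nu\in\Omega}X_\nu)=\prod_{\nu\in\Omega}X_{\pi_x(\nu)}$ (with $X_f^2=I$). *)

From mathcomp Require Import all_boot.
Set Implicit Arguments. Unset Strict Implicit. Unset Printing Implicit Defensive.

Definition color := 'I_4.

Record colex_dual := ColexDual {
  V : finType;                      (* vertices of Gamma^* (= 3-cells of Gamma) *)
  F : finType;                      (* faces of Gamma^*    (= edges of Gamma)   *)
  T : finType;                      (* tetrahedra of Gamma^* (= vertices of Gamma) *)
  col : V -> color;
  fv : F -> {set V};
  tv : T -> {set V};
  tf : T -> {set F};
  tv_card : forall t, #|tv t| = 4;
  tv_col : forall t, {in tv t &, injective col};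
  fv_card : forall f, #|fv f| = 3;
  tf_card : forall t, #|tf t| = 4;
  tf_sub : forall t f, f \in tf t -> fv f \subset tv t;
  face_two : forall f, #|[set t | f \in tf t]| = 2;
  xface_unique : forall t (x : color),
     #|[set f in tf t | x \notin [set col u | u in fv f]]| = 1
}.

Section Defs.
Variable G : colex_dual.

Definition xface (x : color) (f : F G) : bool :=
  x \notin [set col u | u in fv f].

Definition pi_face (x : color) (t : T G) : option (F G) :=
  [pick f in tf t | xface x f].

(* X-type Pauli operators are represented by their supports (products of X's
   over a set, with X^2 = I, i.e. mod-2 chains). *)

Definition BX_color (v : V G) : {set T G} := [set t | v \in tv t].

(* pi_x(prod_{nu in Omega} X_nu) = prod_{nu in Omega} X_{pi_x(nu)}, with X_f^2 = I:
   X_f occurs iff an odd number of nu in Omega have pi_x(nu) = f. *)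
Definition pi_op (x : color) (Om : {set T G}) : {set F G} :=
  [set f | odd #|[set t in Om | pi_face x t == Some f]|].

(* Minor complex Gamma^{*\x}: faces are the x-faces; the 3-cell nu_v (v an
   x-vertex) is the merger of the tetrahedra containing v, i.e. the mod-2 chain
   sum_{nu ∋ v} nu; its boundary is the mod-2 sum of the boundaries of these
   tetrahedra, restricted to the faces of the minor complex (x-faces). *)
Definition merged_boundary (x : color) (v : V G) : {set F G} :=
  [set f | xface x f && odd #|[set t | (v \in tv t) && (f \in tf t)]|].

Definition BX_toric (x : color) (v : V G) : {set F G} := merged_boundary x v.

Definition IdOp : {set F G} := set0.

End Defs.

From mathcomp Require Import all_boot.
Set Implicit Arguments. Unset Strict Implicit. Unset Printing Implicit Defensive.

(** The x-face of a tetrahedron is the face opposite its x-vertex. Hence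
    projecting onto colour [col v] keeps each tetrahedron around [v] as its
    face opposite [v], which is the boundary of the merged cell; projecting
    onto another colour sends the tetrahedra around [v] to faces containing
    [v], and each such face is hit by exactly its two adjacent tetrahedra,
    so everything cancels mod 2. *)

Section ColexDual.
Variable G : colex_dual.
Implicit Types (x : color) (t : T G) (f : F G) (u v : V G).

Lemma pi_faceE x t f : (pi_face x t == Some f) = (f \in tf t) && xface x f.
Proof.
have /eqP/cards1P[f0 Ht] := xface_unique t x.
have xfaceE g : (g \in tf t) && xface x g = (g == f0).
  by rewrite -in_set1 -Ht inE.
rewrite xfaceE /pi_face; case: pickP => [g | none].
  by rewrite xfaceE => /eqP->; rewrite eq_sym.
by have := none f0; rewrite xfaceE eqxx.
Qed.

Lemma col_tv t : [set col u | u in tv t] = [set: color].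
Proof.
apply/eqP; rewrite eqEcard subsetT cardsT card_ord.
by rewrite card_in_imset ?tv_card //; apply: tv_col.
Qed.

Lemma xface_opposite x t f :
  f \in tf t -> xface x f -> exists2 u, col u = x & fv f = tv t :\ u.
Proof.
move=> ft xf.
have /imsetP[u tu ux] : x \in [set col u | u in tv t] by rewrite col_tv inE.
exists u => //; have uNf : u \notin fv f.
  by apply: contra xf; rewrite /xface ux; apply: imset_f.
have card_tvD1 : #|tv t :\ u| = 3.
  by have := cardsD1 u (tv t); rewrite tu tv_card add1n => -[].
apply/eqP; rewrite eqEcard card_tvD1 fv_card leqnn andbT.
apply/subsetP=> w fw; rewrite !inE (subsetP (tf_sub ft)) // andbT.
by apply: contraNneq uNf => <-.
Qed.

Lemma xface_vertex x t f v :
  f \in tf t -> xface x f -> v \in tv t -> col v != x -> v \in fv f.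
Proof.
move=> ft xf tv_v; have [u <- ->] := xface_opposite ft xf.
by rewrite !inE tv_v andbT; apply: contraNneq => ->.
Qed.

Lemma pi_preimage_BX_color x v f : col v != x ->
  [set t in BX_color v | pi_face x t == Some f] =
  if xface x f && (v \in fv f) then [set t | f \in tf t] else set0.
Proof.
move=> vx; apply/setP=> t; rewrite !inE pi_faceE.
case: (boolP (xface x f)) => [xf | _]; last by rewrite !andbF inE.
case: (boolP (v \in fv f)) => [fv_v | vNf]; rewrite ?inE andbT.
  by apply/andb_idl => ft; apply: (subsetP (tf_sub ft)).
apply/negbTE/andP => -[tv_v ft].
by rewrite (xface_vertex ft xf tv_v vx) in vNf.
Qed.

Lemma pi_op_BX_color_col v : pi_op (col v) (BX_color v) = BX_toric (col v) v.
Proof.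
apply/setP=> f; rewrite !inE; case: (boolP (xface (col v) f)) => xf /=.
  by congr (odd _); apply: eq_card => t; rewrite !inE pi_faceE xf andbT.
suff -> : [set t in BX_color v | pi_face (col v) t == Some f] = set0.
  by rewrite cards0.
by apply/setP=> t; rewrite !inE pi_faceE (negbTE xf) !andbF.
Qed.

Lemma pi_op_BX_color_other x v : col v != x -> pi_op x (BX_color v) = IdOp G.
Proof.
move=> vx; apply/setP=> f; rewrite !inE pi_preimage_BX_color //.
by case: ifP; rewrite ?face_two ?cards0.
Qed.

End ColexDual.

Theorem lemma7 (G : colex_dual) (c : color) (v : V G) :
  col v = c ->
  pi_op c (BX_color v) = BX_toric c v /\
  (forall c' : color, c' != c -> pi_op c' (BX_color v) = IdOp G).
Proof.
move=> <-; split=> [|c' c'v]; first exact: pi_op_BX_color_col.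
by apply: pi_op_BX_color_other; rewrite eq_sym.
Qed.
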